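(* Let $\mathcal{G}$ be an $N$-player continuous concave game with pseudo-gradient $U$ (setting in the context). For each player $p$ let $\vartheta^p$ satisfy the regularizer assumption (with strong convexity constant $\rho>0$), let $\epsilon>0$, let $C_\epsilon=(C^p_\epsilon)_{p}$ be the induced mirror map, and let $h(x)=\sum_{p}\vartheta^p(x^p)$ with Bregman divergence $D_h$. Suppose $\mathcal{G}$ is $\mu$-relatively hypo-monotone with respect to $h$, and suppose $\overline x=(\overline x^p)_p\in\mathrm{relint}(\Omega)$ is the unique interior perturbed Nash equilibrium, i.e. $\overline x=C_\epsilon(U(\overline x))$. Let $\gamma>0$, $\epsilon>\mu$, $z(0)\in\mathbb{R}^n$, and let $z(t)$ solve the discounted mirror descent dynamics $\dot z=\gamma(-z+U(x))$, $x=C_\epsilon(z)$, with $x(t)=C_\epsilon(z(t))$ and $x_0=x(0)=C_\epsilon(z(0))$. Then $x(t)\to\overline x$ with $$D_h(\overline x,x(t))\le e^{-\gamma(\epsilon-\mu)\epsilon^{-1}t}D_h(\overline x,x_0),$$ and $$\|\overline x-x(t)\|_2^2\le 2\rho^{-1}e^{-\gamma(\epsilon-\mu)\epsilon^{-1}t}D_h(\overline x,x_0).$$ In particular, for $\mu=0$ (the null monotone case, $(U(x)-U(x'))^\top(x-x')=0$ for all $x,x'$), $\|\overline x-x(t)\|_2^2\le 2\rho^{-1}e^{-\gamma t}D_h(\overline x,x_0)$.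
   Context: Game setting: players $\mathcal{N}=\{1,\dots,N\}$; strategy sets $\Omega^p\subseteq\mathbb{R}^{n_p}$ nonempty, compact, convex; $\Omega=\prod_p\Omega^p\subseteq\mathbb{R}^n$; payoffs $\mathcal{U}^p:\Omega\to\mathbb{R}$ jointly continuous, concave and continuously differentiable in $x^p$ for each fixed $x^{-p}$; pseudo-gradient $U(x)=(\nabla_{x^p}\mathcal{U}^p(x))_p$, assumed $L$-Lipschitz on $\Omega$. Regularizer assumption: $\vartheta^p:\mathbb{R}^{n_p}\to\mathbb{R}\cup\{\infty\}$ closed, proper, $\rho$-strongly convex (Euclidean norm), $\mathrm{dom}(\vartheta^p)=\Omega^p$. Mirror map: $C^p_\epsilon(z^p)=\arg\max_{y^p\in\Omega^p}[{y^p}^\top z^p-\epsilon\vartheta^p(y^p)]$. A perturbed NE $\overline x=C_\epsilon(U(\overline x))$ is a Nash equilibrium of the game with payoffs $\mathcal{U}^p-\epsilon\vartheta^p$. Bregman divergence $D_h(x,y)=h(x)-h(y)-\nabla h(y)^\top(x-y)$; $\mathrm{dom}(\partial h)=\{x:\partial h(x)\ne\varnothing\}$. $\mathcal{G}$ is $\mu$-relatively hypo-monotone w.r.t. $h$ if $(U(x)-U(x'))^\top(x-x')\le\mu(D_h(x,x')+D_h(x',x))$ for all $x,x'\in\mathrm{dom}(\partial h)$. *)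

From mathcomp Require Import all_boot all_order all_algebra.
From mathcomp Require Import all_classical all_reals all_analysis.
Unset Printing Implicit Defensive.
Import Order.TTheory GRing.Theory Num.Theory.
Import numFieldNormedType.Exports.
Local Open Scope ring_scope.
Local Open Scope classical_set_scope.

Definition dotv {R : realType} {T : finType} (u v : T -> R) : R :=
  \sum_(i : T) u i * v i.

Definition sqnorm {R : realType} {T : finType} (u : T -> R) : R := dotv u u.

Definition vsub {R : realType} {T : finType} (u v : T -> R) : T -> R :=
  fun i => u i - v i.

Definition vcomb {R : realType} {T : finType} (l : R) (u v : T -> R) : T -> R :=
  fun i => l * u i + (1 - l) * v i.

Definition convex_set {R : realType} {T : finType} (S : set (T -> R)) : Prop :=
  forall x y, S x -> S y -> forall l : R, 0 <= l <= 1 -> S (vcomb l x y).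

Definition closed_set {R : realType} {T : finType} (S : set (T -> R)) : Prop :=
  forall x, (forall e : R, 0 < e -> exists y, S y /\ sqnorm (vsub x y) < e) -> S x.

Definition bounded_set {R : realType} {T : finType} (S : set (T -> R)) : Prop :=
  exists M : R, forall x, S x -> sqnorm x <= M.

(* compact subset of R^T (Heine-Borel) *)
Definition compact_set {R : realType} {T : finType} (S : set (T -> R)) : Prop :=
  closed_set S /\ bounded_set S.

Definition aff_hull {R : realType} {T : finType} (S : set (T -> R)) : set (T -> R) :=
  fun y => exists (k : nat) (s : 'I_k -> T -> R) (l : 'I_k -> R),
    (forall j, S (s j)) /\ \sum_(j < k) l j = 1 /\
    forall i, y i = \sum_(j < k) l j * s j i.

Definition relint {R : realType} {T : finType} (S : set (T -> R)) : set (T -> R) :=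
  fun x => S x /\ exists delta : R, 0 < delta /\
    forall y, aff_hull S y -> sqnorm (vsub y x) < delta -> S y.

(* A closed proper function with dom = S is represented by its (real) values
   on S; it is +oo outside S.  Closedness = lower semicontinuity, which for the
   extended function with closed domain S amounts to lsc of the restriction. *)
Definition lsc_on {R : realType} {T : finType} (S : set (T -> R)) (f : (T -> R) -> R) : Prop :=
  forall x, S x -> forall e : R, 0 < e -> exists delta : R, 0 < delta /\
    forall y, S y -> sqnorm (vsub y x) < delta -> f x - e < f y.

Definition strongly_convex_on {R : realType} {T : finType} (S : set (T -> R)) (rho : R)
    (f : (T -> R) -> R) : Prop :=
  forall x y, S x -> S y -> forall l : R, 0 <= l <= 1 ->
    f (vcomb l x y) <= l * f x + (1 - l) * f y
                       - rho / 2 * l * (1 - l) * sqnorm (vsub x y).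

Definition regularizer {R : realType} {T : finType} (S : set (T -> R)) (rho : R)
    (f : (T -> R) -> R) : Prop :=
  lsc_on S f /\ strongly_convex_on S rho f.

Definition is_mirror_point {R : realType} {T : finType} (S : set (T -> R)) (eps : R)
    (f : (T -> R) -> R) (z y : T -> R) : Prop :=
  S y /\ forall y', S y' -> dotv y' z - eps * f y' <= dotv y z - eps * f y.

(* joint index set: coordinate j of player p;  R^n = R^{n_1} x ... x R^{n_N} *)
Definition Idx {N : nat} (d : 'I_N -> nat) : finType := {p : 'I_N & 'I_(d p)}.

Definition block {R : realType} {N : nat} {d : 'I_N -> nat} (x : Idx d -> R) (p : 'I_N)
  : 'I_(d p) -> R := fun j => x (existT (fun q : 'I_N => 'I_(d q)) p j).

Definition inOmega {R : realType} {N : nat} {d : 'I_N -> nat}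
    (Om : forall p : 'I_N, set ('I_(d p) -> R)) (x : Idx d -> R) : Prop :=
  forall p, Om p (block x p).

Definition mirror_map_rel {R : realType} {N : nat} {d : 'I_N -> nat}
    (Om : forall p : 'I_N, set ('I_(d p) -> R))
    (th : forall p : 'I_N, ('I_(d p) -> R) -> R) (eps : R)
    (z x : Idx d -> R) : Prop :=
  forall p, is_mirror_point (Om p) eps (th p) (block z p) (block x p).

(* h(x) = sum_p th^p(x^p)  (finite on Omega, +oo outside) *)
Definition hsum {R : realType} {N : nat} {d : 'I_N -> nat}
    (th : forall p : 'I_N, ('I_(d p) -> R) -> R) (x : Idx d -> R) : R :=
  \sum_(p < N) th p (block x p).

Definition subgrad_h {R : realType} {N : nat} {d : 'I_N -> nat}
    (Om : forall p : 'I_N, set ('I_(d p) -> R))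
    (th : forall p : 'I_N, ('I_(d p) -> R) -> R) (x g : Idx d -> R) : Prop :=
  inOmega Om x /\
  forall y, inOmega Om y -> hsum th x + dotv g (vsub y x) <= hsum th y.

(* Bregman divergence D_h(x,y) = h(x) - h(y) - g^T (x - y), g = "grad h(y)" *)
Definition bregman {R : realType} {N : nat} {d : 'I_N -> nat}
    (th : forall p : 'I_N, ('I_(d p) -> R) -> R) (x y g : Idx d -> R) : R :=
  hsum th x - hsum th y - dotv g (vsub x y).

(* mu-relative hypo-monotonicity w.r.t. h, for all x, x' in dom(dh) and
   every choice of (sub)gradients *)
Definition rel_hypo_monotone {R : realType} {N : nat} {d : 'I_N -> nat}
    (Om : forall p : 'I_N, set ('I_(d p) -> R))
    (th : forall p : 'I_N, ('I_(d p) -> R) -> R)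
    (U : (Idx d -> R) -> Idx d -> R) (mu : R) : Prop :=
  forall x x' g g', subgrad_h Om th x g -> subgrad_h Om th x' g' ->
    dotv (vsub (U x) (U x')) (vsub x x') <=
      mu * (bregman th x x' g' + bregman th x' x g).

(* continuous concave game with pseudo-gradient U, L-Lipschitz on Omega.
   Payoffs are defined on all of R^n (so partial derivatives make sense at
   points of Omega). *)
Definition concave_game {R : realType} {N : nat} {d : 'I_N -> nat}
    (Om : forall p : 'I_N, set ('I_(d p) -> R))
    (u : 'I_N -> (Idx d -> R) -> R)
    (U : (Idx d -> R) -> Idx d -> R) (L : R) : Prop :=
  (forall p, Om p !=set0 /\ compact_set (Om p) /\ convex_set (Om p)) /\
  (forall p x, inOmega Om x -> forall e : R, 0 < e -> exists delta : R, 0 < delta /\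
     forall y, inOmega Om y -> sqnorm (vsub y x) < delta -> `|u p y - u p x| < e) /\
  (forall p x y, inOmega Om x -> inOmega Om y ->
     (forall q, q != p -> block x q = block y q) ->
     forall l : R, 0 <= l <= 1 ->
       l * u p x + (1 - l) * u p y <= u p (vcomb l x y)) /\
  (forall x, inOmega Om x -> forall i : Idx d,
     is_derive (0 : R) (1 : R)
       (fun s : R => u (projT1 i) (fun k => x k + (if k == i then s else 0)))
       (U x i)) /\
  0 <= L /\
  (forall x y, inOmega Om x -> inOmega Om y ->
     sqnorm (vsub (U x) (U y)) <= L ^+ 2 * sqnorm (vsub x y)).

From Pilot Require Import Defs.
From mathcomp Require Import all_boot all_order all_algebra.
From mathcomp Require Import all_classical all_reals all_analysis.
From mathcomp Require Import ring lra.
Import Order.TTheory GRing.Theory Num.Theory.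
Import numFieldNormedType.Exports.
Local Open Scope ring_scope.
Local Open Scope classical_set_scope.

(* Write phi(z) = max_(y in Omega) <y, z> - eps h(y), attained at y = C_eps(z).
   With z(t)/eps in dh(x(t)), the divergence D(t) = D_h(xbar, x(t)) equals
   h(xbar) + (phi(z(t)) - <xbar, z(t)>)/eps.  Strong convexity of h makes phi
   differentiable with gradient C_eps and a quadratic remainder, so
   D' = gamma/eps <U(x) - z, x - xbar> along the flow.  As U(xbar)/eps is a
   subgradient of h at xbar, relative hypo-monotonicity bounds this by
   -gamma (eps - mu)/eps (D_h(xbar, x) + D_h(x, xbar)) <= -gamma (eps - mu)/eps D,
   and Gronwall's inequality gives the exponential decay; strong convexity
   once more gives ||xbar - x||^2 <= 2 D / rho. *)

Section Euclidean.
Context {R : realType} {T : finType}.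
Implicit Types u v w : T -> R.

Lemma dotvC u v : dotv u v = dotv v u.
Proof. by apply: eq_bigr => i _; rewrite mulrC. Qed.

Lemma dotvBl u v w : dotv (vsub u v) w = dotv u w - dotv v w.
Proof. by rewrite /dotv -sumrB; apply: eq_bigr => i _; rewrite /vsub mulrBl. Qed.

Lemma dotvBr u v w : dotv w (vsub u v) = dotv w u - dotv w v.
Proof. by rewrite /dotv -sumrB; apply: eq_bigr => i _; rewrite /vsub mulrBr. Qed.

Lemma dotvMl (c : R) u v : dotv (fun i => c * u i) v = c * dotv u v.
Proof. by rewrite /dotv mulr_sumr; apply: eq_bigr => i _; rewrite mulrA. Qed.

Lemma dotv_divl (c : R) u v : dotv (fun i => u i / c) v = dotv u v / c.
Proof. by rewrite /dotv mulr_suml; apply: eq_bigr => i _; rewrite mulrAC. Qed.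

Lemma dotv0l v : dotv (fun=> 0) v = 0.
Proof. by rewrite /dotv big1 // => i _; rewrite mul0r. Qed.

Lemma sqnorm_ge0 u : 0 <= sqnorm u.
Proof. by apply: sumr_ge0 => i _; rewrite -expr2 sqr_ge0. Qed.

Lemma sqnorm0 : sqnorm (fun _ : T => 0 : R) = 0.
Proof. exact: dotv0l. Qed.

Lemma sqnormMl (c : R) u : sqnorm (fun i => c * u i) = c * c * sqnorm u.
Proof. by rewrite /sqnorm dotvMl dotvC dotvMl mulrA. Qed.

Lemma sqnorm_vsubC u v : sqnorm (vsub u v) = sqnorm (vsub v u).
Proof. by apply: eq_bigr => i _; rewrite /vsub; ring. Qed.

Lemma sqr_le_sqnorm u i : u i ^+ 2 <= sqnorm u.
Proof.
rewrite /sqnorm /dotv (bigD1 i) //= -expr2 lerDl.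
by apply: sumr_ge0 => j _; rewrite -expr2 sqr_ge0.
Qed.

Lemma dotv_le_young u v {c : R} : 0 < c ->
  dotv u v <= c / 2 * sqnorm u + sqnorm v / (2 * c).
Proof.
move=> c0; rewrite /sqnorm /dotv mulr_sumr mulr_suml -big_split /=.
apply: ler_sum => i _; rewrite -subr_ge0.
have -> : c / 2 * (u i * u i) + v i * v i / (2 * c) - u i * v i
    = (c * u i - v i) ^+ 2 / (2 * c) by field; rewrite gt_eqF.
by rewrite divr_ge0 ?sqr_ge0 // mulr_ge0 // ltW.
Qed.

Lemma cvg_dotv {I : Type} {F : set_system I} {FF : Filter F}
    (w : I -> T -> R) (a c : T -> R) :
  (forall i, w j i @[j --> F] --> a i) -> dotv (w j) c @[j --> F] --> dotv a c.
Proof.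
move=> wa; apply: (@cvg_big _ _ +%R 0 xpredT add_continuous) => // i _.
exact: cvgMr_tmp.
Qed.

Lemma cvg_sqnorm {I : Type} {F : set_system I} {FF : Filter F}
    (w : I -> T -> R) (a : T -> R) :
  (forall i, w j i @[j --> F] --> a i) -> sqnorm (w j) @[j --> F] --> sqnorm a.
Proof.
move=> wa; apply: (@cvg_big _ _ +%R 0 xpredT add_continuous) => // i _.
exact: cvgM.
Qed.

End Euclidean.

Section Calculus.
Context {R : realType}.

Lemma is_derive1P (f : R -> R) (t l : R) :
  is_derive t 1 f l <-> (fun h => h^-1 * (f (h + t) - f t)) @ 0^' --> l.
Proof.
have quotE : (fun h : R => h^-1 *: ((f \o shift t) (h *: 1) - f t)) =
             (fun h => h^-1 * (f (h + t) - f t)).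
  by apply/funext => h /=; rewrite [h *: 1]mulr1.
split=> [[df <-]|fl]; first by move: df; rewrite /derivable /derive quotE.
by apply: DeriveDef; rewrite /derivable /derive quotE; [exact: cvgP fl | exact: cvg_lim].
Qed.

Lemma cvg0_norm_le {I : Type} {F : set_system I} {FF : Filter F} (r b : I -> R) :
  (\forall j \near F, `|r j| <= b j) -> b j @[j --> F] --> 0 -> r j @[j --> F] --> 0.
Proof.
move=> rb b0; apply: (@squeeze_cvgr _ _ _ _ (fun j => - b j) b) => //.
  by apply: filterS rb => j; rewrite ler_norml.
by rewrite -oppr0; exact: cvgN.
Qed.

Lemma cvg_of_sqr_le_expR {f : R -> R} {l C k : R} : 0 < k ->
  (forall t, 0 <= t -> (l - f t) ^+ 2 <= C * expR (- (k * t))) ->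
  f t @[t --> +oo] --> l.
Proof.
move=> k0 fl.
have kt_cvg : k * t @[t --> +oo] --> +oo.
  apply/cvgryPge => A; near=> t; rewrite -ler_pdivrMl //.
apply/cvgrPdist_lt => e e0.
have decay : C * expR (- (k * t)) @[t --> +oo] --> 0.
  by rewrite -(mulr0 C); apply: cvgMl_tmp; exact: (cvg_comp _ _ kt_cvg (@cvgr_expR R)).
near=> t.
have t0 : 0 <= t by near: t; apply: nbhs_pinfty_ge; rewrite num_real.
have small : C * expR (- (k * t)) < e ^+ 2.
  by near: t; apply: (cvgr_lt 0) => //; rewrite exprn_gt0.
rewrite -(ltr_pXn2r (_ : 0 < 2)%N) ?nnegrE ?(ltW e0) //.
by rewrite -normrX ger0_norm ?sqr_ge0 // (le_lt_trans (fl t t0)).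
Unshelve. all: by end_near.
Qed.

Lemma le_expR_of_derive (D D' : R -> R) (k : R) :
  D s @[s --> 0^'+] --> D 0 ->
  (forall t : R, 0 < t -> is_derive t 1 D (D' t)) ->
  (forall t, 0 < t -> D' t + k * D t <= 0) ->
  forall t, 0 <= t -> D t <= expR (- (k * t)) * D 0.
Proof.
move=> D0 dD dissipative.
pose F t := expR (k * t) * D t.
have dexp (t : R) : is_derive t 1 (fun s => expR (k * s)) (expR (k * t) * k).
  apply: (is_derive1_comp (f := expR) (g := fun s => k * s)).
  by apply: is_derive_eq; exact: mulr1.
have dF (t : R) : 0 < t -> is_derive t 1 F (expR (k * t) * (D' t + k * D t)).
  move=> t0; apply: is_derive_eq; first exact: is_deriveM (dexp t) (dD t t0).
  by rewrite /GRing.scale /=; ring.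
have F_cont : {within `[0, +oo[, continuous F}.
  apply/continuous_within_itvcyP; split.
    move=> t; rewrite in_itv /= andbT => t0.
    have : differentiable F t by apply/derivable1_diffP; case: (dF t t0).
    by move/differentiable_continuous.
  have exp0 : expR (k * s) @[s --> 0^'+] --> expR (k * 0).
    apply: cvg_within_filter.
    have : differentiable (fun s => expR (k * s)) 0.
      by apply/derivable1_diffP; case: (dexp 0).
    by move/differentiable_continuous.
  exact: cvgM exp0 D0.
have F_noninc (t : R) : 0 <= t -> F t <= F 0.
  apply: (ler0_derive1_nincry _ _ F_cont) => // s; rewrite in_itv /= andbT => s0.
    by case: (dF s s0).
  rewrite derive1E; case: (dF s s0) => _ ->.
  by rewrite mulr_ge0_le0 ?expR_ge0 ?dissipative.
move=> t t0; have := F_noninc t t0; rewrite {2}/F mulr0 expR0 mul1r => FD.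
have -> : D t = expR (- (k * t)) * F t by rewrite /F mulrA -expRD addNr expR0 mul1r.
by rewrite ler_wpM2l ?expR_ge0.
Qed.

End Calculus.

Section QuadraticRemainder.
Context {R : realType} {T : finType}.
Variables (D : R -> R) (Z : R -> T -> R) (t K : R) (c : T -> R).

Let rem s := D s - D t - dotv (vsub (Z s) (Z t)) c.

Lemma cvg_of_quadratic_remainder (F : set_system R) {FF : Filter F} :
  (forall i, Z s i @[s --> F] --> Z t i) ->
  (\forall s \near F, `|rem s| <= K * sqnorm (vsub (Z s) (Z t))) ->
  D s @[s --> F] --> D t.
Proof.
move=> Zt rem_le.
have dZ0 i : vsub (Z s) (Z t) i @[s --> F] --> 0.
  by rewrite -(subrr (Z t i)); apply: cvgB => //; exact: cvg_cst.
have rem0 : rem s @[s --> F] --> 0.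
  apply: cvg0_norm_le rem_le _; rewrite -(mulr0 K) -(@sqnorm0 R T).
  by apply: cvgMl_tmp; exact: cvg_sqnorm.
have lin0 : dotv (vsub (Z s) (Z t)) c @[s --> F] --> 0.
  by rewrite -(dotv0l c); exact: cvg_dotv.
by apply/subr_cvg0; apply: cvg_sub0 lin0.
Qed.

Lemma is_derive_of_quadratic_remainder (Z' : T -> R) : 0 < t ->
  (forall i, is_derive t 1 (fun s => Z s i) (Z' i)) ->
  (forall s, 0 <= s -> `|rem s| <= K * sqnorm (vsub (Z s) (Z t))) ->
  is_derive t 1 D (dotv Z' c).
Proof.
move=> t0 dZ rem_le; apply/is_derive1P.
pose w h i := h^-1 * vsub (Z (h + t)) (Z t) i.
have w_cvg i : w h i @[h --> 0^'] --> Z' i by apply/is_derive1P.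
have quotE h : h^-1 * (D (h + t) - D t) - dotv (w h) c = h^-1 * rem (h + t).
  by rewrite /w dotvMl -mulrBr.
apply: (cvg_sub0 _ (cvg_dotv _ _ _ w_cvg)).
apply: (@cvg0_norm_le _ _ _ _ _ (fun h => K * (`|h| * sqnorm (w h)))).
  near=> h; rewrite /= quotE.
  have h0 : 0 < `|h| by rewrite normr_gt0; near: h; exact: nbhs_dnbhs_neq.
  have s0 : 0 <= h + t.
    have : `|h| < t by near: h; exact: dnbhs0_lt.
    by rewrite ltr_norml => /andP[]; lra.
  have sqE : sqnorm (vsub (Z (h + t)) (Z t)) = `|h| ^+ 2 * sqnorm (w h).
    by rewrite /w sqnormMl real_normK ?num_real //; field; rewrite -normr_gt0.
  rewrite normrM normfV ler_pdivrMl //; apply: le_trans (rem_le _ s0) _.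
  suff -> : `|h| * (K * (`|h| * sqnorm (w h))) = K * sqnorm (vsub (Z (h + t)) (Z t)).
    by [].
  by rewrite sqE; ring.
have abs0 : `|h| @[h --> (0 : R)^'] --> (0 : R).
  rewrite -[X in _ --> X](@normr0 _ R); apply: cvg_within_filter; apply: cvg_norm.
  exact: cvg_id.
have : K * (`|h| * sqnorm (w h)) @[h --> 0^'] --> K * (0 * sqnorm Z').
  by apply: cvgMl_tmp; apply: cvgM; [exact: abs0 | exact: cvg_sqnorm].
by rewrite mul0r mulr0.
Unshelve. all: by end_near.
Qed.

End QuadraticRemainder.

Section MirrorMap.
Context {R : realType} {N : nat} {d : 'I_N -> nat}.
Context {Om : forall p : 'I_N, set ('I_(d p) -> R)}
        {th : forall p : 'I_N, ('I_(d p) -> R) -> R} {rho eps : R}.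
Hypothesis rho_gt0 : 0 < rho.
Hypothesis eps_gt0 : 0 < eps.
Hypothesis th_reg : forall p, regularizer (Om p) rho (th p).
Hypothesis Om_convex : forall p, Defs.convex_set (Om p).
Implicit Types x y z g : Idx d -> R.

Definition mirror_objective x z := dotv x z - eps * hsum th x.

Lemma dotv_block (u v : Idx d -> R) :
  dotv u v = \sum_(p < N) dotv (block u p) (block v p).
Proof.
rewrite /dotv (@sig_big_dep R 0 _ _ (fun p => 'I_(d p)) xpredT (fun _ _ => true)
  (fun p j => u (existT _ p j) * v (existT _ p j))) /=.
by apply: eq_bigr => -[p j].
Qed.

Lemma mirror_map_relP {z x} : mirror_map_rel Om th eps z x ->
  inOmega Om x /\
  forall y, inOmega Om y -> mirror_objective y z <= mirror_objective x z.
Proof.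
move=> Cz; split=> [p|y Om_y]; first exact: (Cz p).1.
rewrite /mirror_objective !(dotv_block _ z) /hsum !mulr_sumr -!sumrB.
by apply: ler_sum => p _; exact: (Cz p).2.
Qed.

Lemma mirror_map_subgrad {z x} : mirror_map_rel Om th eps z x ->
  subgrad_h Om th x (fun i => z i / eps).
Proof.
move=> /mirror_map_relP[Om_x xmax]; split=> // y Om_y.
have := xmax y Om_y; rewrite /mirror_objective dotv_divl dotvBr !(dotvC z) => obj.
suff : (dotv y z - dotv x z) / eps <= hsum th y - hsum th x by lra.
by rewrite ler_pdivrMr //; nra.
Qed.

Lemma inOmega_vcomb {x y l} : inOmega Om x -> inOmega Om y ->
  0 <= l <= 1 -> inOmega Om (vcomb l x y).
Proof. by move=> Om_x Om_y l01 p; exact: Om_convex (Om_x p) (Om_y p) l l01. Qed.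

Lemma hsum_strongly_convex {x y l} : inOmega Om x -> inOmega Om y ->
  0 <= l <= 1 ->
  hsum th (vcomb l x y) <= l * hsum th x + (1 - l) * hsum th y
                           - rho / 2 * l * (1 - l) * sqnorm (vsub x y).
Proof.
move=> Om_x Om_y l01.
rewrite /sqnorm dotv_block /hsum !mulr_sumr -big_split -sumrB /=.
by apply: ler_sum => p _; exact: (th_reg p).2.
Qed.

Lemma bregman_ge_sqnorm {x y g} : subgrad_h Om th x g -> inOmega Om y ->
  rho / 2 * sqnorm (vsub y x) <= bregman th y x g.
Proof.
move=> [Om_x gx] Om_y.
set a := rho / 2 * sqnorm (vsub y x); set D := bregman th y x g.
have along_segment l : 0 < l <= 1 -> (1 - l) * a <= D.
  move=> /andP[l0 l1]; have l01 : 0 <= l <= 1 by rewrite l1 ltW.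
  have := gx _ (inOmega_vcomb Om_y Om_x l01).
  have -> : dotv g (vsub (vcomb l y x) x) = l * dotv g (vsub y x).
    by rewrite -dotvMl /dotv; apply: eq_bigr => i _; rewrite /vsub /vcomb; ring.
  have := hsum_strongly_convex Om_y Om_x l01.
  move=> convex subgrad; rewrite -(ler_pM2l l0) /a /D /bregman; nra.
have D_ge0 : 0 <= D by have := along_segment 1; rewrite subrr mul0r; apply; lra.
(* Let [l] tend to [0] in [along_segment]. *)
rewrite leNgt; apply/negP => Da.
have a_gt0 : 0 < a by lra.
pose l := (a - D) / (2 * a).
have l0 : 0 < l by rewrite divr_gt0 //; lra.
have l1 : l <= 1 by rewrite ler_pdivrMr; lra.
have := along_segment l; rewrite l0 l1 => /(_ isT).
have -> : (1 - l) * a = (a + D) / 2 by rewrite /l; field; rewrite gt_eqF.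
lra.
Qed.

Lemma sqnorm_le_bregman {x y g} : subgrad_h Om th x g -> inOmega Om y ->
  sqnorm (vsub y x) <= 2 / rho * bregman th y x g.
Proof.
move=> gx Om_y; rewrite -(ler_pM2l (_ : 0 < rho / 2)) ?divr_gt0 // mulrA.
rewrite (_ : rho / 2 * (2 / rho) = 1) ?mul1r; first exact: bregman_ge_sqnorm.
by field; rewrite gt_eqF.
Qed.

Lemma mirror_map_strongly_monotone {z z' x x'} :
  mirror_map_rel Om th eps z x -> mirror_map_rel Om th eps z' x' ->
  eps * rho * sqnorm (vsub x x') <= dotv (vsub x x') (vsub z z').
Proof.
move=> Cz Cz'; have gx := mirror_map_subgrad Cz; have gx' := mirror_map_subgrad Cz'.
have le1 := bregman_ge_sqnorm gx gx'.1; have le2 := bregman_ge_sqnorm gx' gx.1.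
rewrite /bregman !dotv_divl !dotvBr (sqnorm_vsubC x') in le1 le2.
rewrite dotvBl !dotvBr !(dotvC x) !(dotvC x'); set S := sqnorm _ in le1 le2 *.
rewrite -mulrA -ler_pdivlMl //.
have -> : eps^-1 * (dotv z x - dotv z' x - (dotv z x' - dotv z' x')) =
  (dotv z x - dotv z x') / eps - (dotv z' x - dotv z' x') / eps by field; rewrite gt_eqF.
lra.
Qed.

Lemma mirror_map_dotv_le {z z' x x'} :
  mirror_map_rel Om th eps z x -> mirror_map_rel Om th eps z' x' ->
  dotv (vsub x x') (vsub z z') <= sqnorm (vsub z z') / (eps * rho).
Proof.
move=> Cz Cz'; have epsrho_gt0 : 0 < eps * rho by rewrite mulr_gt0.
have := mirror_map_strongly_monotone Cz Cz'.
have := dotv_le_young (vsub x x') (vsub z z') epsrho_gt0.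
set P := dotv _ _ => young strong.
rewrite ler_pdivlMr //.
have : sqnorm (vsub z z') / (2 * (eps * rho)) * (eps * rho) = sqnorm (vsub z z') / 2.
  by field; rewrite !gt_eqF.
nra.
Qed.

Lemma mirror_objective_expansion {zs zt xs xt} :
  mirror_map_rel Om th eps zs xs -> mirror_map_rel Om th eps zt xt ->
  0 <= mirror_objective xs zs - mirror_objective xt zt - dotv xt (vsub zs zt)
    <= sqnorm (vsub zs zt) / (eps * rho).
Proof.
move=> Cs Ct; have [Om_xs smax] := mirror_map_relP Cs.
have [Om_xt tmax] := mirror_map_relP Ct.
have := smax _ Om_xt; have := tmax _ Om_xs; have := mirror_map_dotv_le Cs Ct.
rewrite /mirror_objective !dotvBl !dotvBr => ? ? ?.
apply/andP; split; lra.
Qed.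

Lemma bregman_mirror_remainder {zs zt xs xt} xb :
  mirror_map_rel Om th eps zs xs -> mirror_map_rel Om th eps zt xt ->
  `|bregman th xb xs (fun i => zs i / eps) - bregman th xb xt (fun i => zt i / eps)
     - dotv (vsub zs zt) (fun i => (xt i - xb i) / eps)|
  <= 1 / (eps * eps * rho) * sqnorm (vsub zs zt).
Proof.
move=> Cs Ct; have /andP[lb ub] := mirror_objective_expansion Cs Ct.
set E := mirror_objective xs zs - _ - _ in lb ub.
have -> : bregman th xb xs (fun i => zs i / eps) - bregman th xb xt (fun i => zt i / eps)
    - dotv (vsub zs zt) (fun i => (xt i - xb i) / eps) = E / eps.
  rewrite /E /mirror_objective /bregman (dotvC (vsub zs zt)) !dotv_divl.
  rewrite !dotvBl !dotvBr !(dotvC xs) !(dotvC xt) !(dotvC xb).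
  by field; rewrite gt_eqF.
rewrite ger0_norm ?divr_ge0 ?(ltW eps_gt0) // ler_pdivrMr //.
suff -> : 1 / (eps * eps * rho) * sqnorm (vsub zs zt) * eps
  = sqnorm (vsub zs zt) / (eps * rho) by [].
by field; rewrite !gt_eqF.
Qed.

Lemma bregman_dissipation {U : (Idx d -> R) -> Idx d -> R} {mu gamma : R} {xb z x} :
  rel_hypo_monotone Om th U mu -> mu <= eps -> 0 <= gamma ->
  mirror_map_rel Om th eps (U xb) xb -> mirror_map_rel Om th eps z x ->
  dotv (fun i => gamma * (- z i + U x i)) (fun i => (x i - xb i) / eps)
  + gamma * (eps - mu) / eps * bregman th xb x (fun i => z i / eps) <= 0.
Proof.
move=> hypo mu_le gamma_ge0 Cb Cz.
have gx := mirror_map_subgrad Cz; have gb := mirror_map_subgrad Cb.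
have := hypo _ _ _ _ gx gb; rewrite dotvBl.
have D'_ge0 : 0 <= bregman th x xb (fun i => U xb i / eps).
  apply: le_trans (bregman_ge_sqnorm gb gx.1).
  by rewrite mulr_ge0 ?sqnorm_ge0 // divr_ge0 // ltW.
set D := bregman th xb x _; set D' := bregman th x xb _ in D'_ge0 *.
have sumE : eps * (D + D') = dotv z (vsub x xb) - dotv (U xb) (vsub x xb).
  by rewrite /D /D' /bregman !dotv_divl !dotvBr; field; rewrite gt_eqF.
have -> : dotv (fun i => gamma * (- z i + U x i)) (fun i => (x i - xb i) / eps)
    = gamma / eps * (dotv (U x) (vsub x xb) - dotv z (vsub x xb)).
  rewrite /dotv -sumrB mulr_sumr; apply: eq_bigr => i _; rewrite /vsub.
  by field; rewrite gt_eqF.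
move=> hypo_x; rewrite [gamma * _ / eps]mulrAC -[gamma / eps * _ * D]mulrA -mulrDr.
rewrite mulr_ge0_le0 ?divr_ge0 ?(ltW eps_gt0) //.
have : 0 <= eps - mu by rewrite subr_ge0.
move=> /mulr_ge0 /(_ D'_ge0); nra.
Qed.

End MirrorMap.

Theorem mainTheorem4 (R : realType) (N : nat) (d : 'I_N -> nat)
    (Om : forall p : 'I_N, set ('I_(d p) -> R))
    (u : 'I_N -> (Idx d -> R) -> R)
    (U : (Idx d -> R) -> Idx d -> R) (L : R)
    (th : forall p : 'I_N, ('I_(d p) -> R) -> R)
    (rho eps mu gamma : R)
    (xbar : Idx d -> R)
    (z x : R -> Idx d -> R) :
  concave_game Om u U L ->
  0 < rho ->
  (forall p, regularizer (Om p) rho (th p)) ->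
  0 < eps ->
  rel_hypo_monotone Om th U mu ->
  (* xbar is the unique interior perturbed Nash equilibrium *)
  (forall p, relint (Om p) (block xbar p)) ->
  mirror_map_rel Om th eps (U xbar) xbar ->
  (forall y, (forall p, relint (Om p) (block y p)) ->
     mirror_map_rel Om th eps (U y) y -> y = xbar) ->
  0 < gamma ->
  mu < eps ->
  (* x(t) = C_eps(z(t)) and z solves  z' = gamma (-z + U(x))  for t >= 0 *)
  (forall t : R, 0 <= t -> mirror_map_rel Om th eps (z t) (x t)) ->
  (forall i : Idx d, (fun s => z s i) s @[s --> 0^'+] --> z 0 i) ->
  (forall t : R, 0 < t -> forall i : Idx d,
     is_derive t (1 : R) (fun s => z s i) (gamma * (- z t i + U (x t) i))) ->
  (* D_h(xbar, x(t)) is taken with grad h(x(t)) := z(t)/eps (in dh(x(t))) *)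
  let D (t : R) := bregman th xbar (x t) (fun i => z t i / eps) in
  (forall i : Idx d, x t i @[t --> +oo] --> xbar i) /\
  (forall t : R, 0 <= t ->
     D t <= expR (- (gamma * (eps - mu) / eps * t)) * D 0) /\
  (forall t : R, 0 <= t ->
     sqnorm (vsub xbar (x t)) <=
       2 / rho * expR (- (gamma * (eps - mu) / eps * t)) * D 0) /\
  (mu = 0 -> forall t : R, 0 <= t ->
     sqnorm (vsub xbar (x t)) <= 2 / rho * expR (- (gamma * t)) * D 0).
Proof.
move=> [Om_props _] rho_gt0 th_reg eps_gt0 hypo _ Cbar _ gamma_gt0 mu_lt_eps
  Cz z_cont0 dz D.
have Om_convex p : Defs.convex_set (Om p) by case: (Om_props p) => _ [].
have remainder s t : 0 <= s -> 0 <= t ->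
    `|D s - D t - dotv (vsub (z s) (z t)) (fun i => (x t i - xbar i) / eps)|
    <= 1 / (eps * eps * rho) * sqnorm (vsub (z s) (z t)).
  by move=> s0 t0; exact: bregman_mirror_remainder (Cz s s0) (Cz t t0).
set k := gamma * (eps - mu) / eps.
have k_gt0 : 0 < k by rewrite divr_gt0 // mulr_gt0 // subr_gt0.
have D_decay : forall t, 0 <= t -> D t <= expR (- (k * t)) * D 0.
  apply: le_expR_of_derive => [|t t0|t t0].
  - apply: (cvg_of_quadratic_remainder _ _ _ _ _ _ z_cont0).
    by near=> s; apply: remainder => //; apply: ltW; near: s; exact: nbhs_right_gt.
  - apply: (is_derive_of_quadratic_remainder (T := Idx d) _ _ _ _ _ _ t0 (dz t t0)).
    by move=> s s0; apply: remainder => //; exact: ltW.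
  - have diss := bregman_dissipation rho_gt0 eps_gt0 th_reg Om_convex hypo (ltW mu_lt_eps)
      (ltW gamma_gt0) Cbar (Cz t (ltW t0)).
    exact: diss.
have sqnorm_decay t : 0 <= t ->
    sqnorm (vsub xbar (x t)) <= 2 / rho * expR (- (k * t)) * D 0.
  move=> t0; apply: le_trans (sqnorm_le_bregman rho_gt0 th_reg Om_convex
    (mirror_map_subgrad eps_gt0 (Cz t t0)) (mirror_map_relP Cbar).1) _.
  by rewrite -[2 / rho * _ * D 0]mulrA ler_wpM2l ?D_decay // divr_ge0 // ltW.
split; last split; [|exact: D_decay|split; first exact: sqnorm_decay].
  move=> i; apply: (cvg_of_sqr_le_expR (C := 2 / rho * D 0) k_gt0) => t t0.
  by apply: le_trans (sqr_le_sqnorm (vsub xbar (x t)) i) _; rewrite mulrAC; exact: sqnorm_decay.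
move=> mu0 t t0; have := sqnorm_decay t t0.
by rewrite /k mu0 subr0 mulfK ?gt_eqF.
Unshelve. all: by end_near.
Qed.
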